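(* Let $\phi$ be a formula in $\mathsf F(\mathrm{LTL}[\mathsf O])$ and $\psi$ a formula in $\mathrm{LTL}[\mathsf X,\mathsf{wX},\mathsf F,\mathsf G]$. If $\phi\equiv_\omega\psi$, then $\psi\equiv_\omega\mathsf F\psi$.
   Context: Let $AP$ be a finite set of atomic propositions and $\Sigma=2^{AP}$. Formulae (negation normal form) are built from literals $p,\neg p$ ($p\in AP$) with $\land,\lor$ and temporal operators. Semantics on infinite traces $\sigma\in\Sigma^\omega$ at positions $i\in\mathbb N$: literals/Booleans as usual; $\mathsf X\phi$ and $\mathsf{wX}\phi$: $\phi$ holds at $i+1$; $\mathsf F\phi$/$\mathsf G\phi$: $\phi$ at some/every $j\ge i$; $\mathsf O\phi$: $\phi$ at some $0\le j\le i$. $\mathcal L^\omega(\phi)=\{\sigma\in\Sigma^\omega:\sigma,0\models\phi\}$; $\phi\equiv_\omega\psi$ iff $\mathcal L^\omega(\phi)=\mathcal L^\omega(\psi)$. $\mathrm{LTL}[S]$: formulae whose temporal operators lie in $S$; $\mathsf F(\mathrm{LTL}[\mathsf O])$: formulae $\mathsf F(\alpha)$ with $\alpha\in\mathrm{LTL}[\mathsf O]$. *)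

From mathcomp Require Import all_boot.
Set Implicit Arguments. Unset Strict Implicit. Unset Printing Implicit Defensive.

(* LTL formulae in negation normal form over a finite set AP of atomic
   propositions. Letters are Sigma = 2^AP = {set AP}; traces are infinite
   words nat -> {set AP}. *)
Section LTL.
Variable AP : finType.

Inductive form : Type :=
| Lit : AP -> form
| NLit : AP -> form
| And : form -> form -> form
| Or : form -> form -> form
| Next : form -> form
| WNext : form -> form
| Fin : form -> form
| Glob : form -> form
| Once : form -> form.

Definition trace := nat -> {set AP}.

Fixpoint sat (s : trace) (i : nat) (f : form) : Prop :=
  match f with
  | Lit p => p \in s i
  | NLit p => p \notin s i
  | And a b => sat s i a /\ sat s i b
  | Or a b => sat s i a \/ sat s i b
  | Next a => sat s i.+1 a
  | WNext a => sat s i.+1 a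
  | Fin a => exists j, i <= j /\ sat s j a
  | Glob a => forall j, i <= j -> sat s j a
  | Once a => exists j, j <= i /\ sat s j a
  end.

Definition in_lang (f : form) (s : trace) : Prop := sat s 0 f.
Definition equiv_omega (f g : form) : Prop := forall s, in_lang f s <-> in_lang g s.

Fixpoint is_LTL_O (f : form) : Prop :=
  match f with
  | Lit _ | NLit _ => True
  | And a b | Or a b => is_LTL_O a /\ is_LTL_O b
  | Once a => is_LTL_O a
  | _ => False
  end.

Definition is_F_LTL_O (f : form) : Prop :=
  exists a, f = Fin a /\ is_LTL_O a.

Fixpoint is_LTL_XwXFG (f : form) : Prop :=
  match f with
  | Lit _ | NLit _ => True
  | And a b | Or a b => is_LTL_XwXFG a /\ is_LTL_XwXFG b
  | Next a | WNext a | Fin a | Glob a => is_LTL_XwXFG a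
  | Once _ => False
  end.
End LTL.

From mathcomp Require Import all_boot.
From mathcomp Require Import zify.

(* A pure-future formula holds at position j of a trace exactly when it holds
   at the start of the suffix from j, so F psi forces psi on some suffix s^j.
   There psi is equivalent to F alpha with alpha a past formula, and a past
   formula true at position k of s^j stays true at position j + k of s:
   Once only sees more history. Hence s satisfies F alpha, i.e. psi. *)

Definition suffix {AP : finType} (j : nat) (s : trace AP) : trace AP :=
  fun n => s (j + n).

Lemma sat_suffix (AP : finType) (f : form AP) (s : trace AP) (j i : nat) :
  is_LTL_XwXFG f -> sat (suffix j s) i f <-> sat s (j + i) f.
Proof.
elim: f i => //= [a IHa b IHb|a IHa b IHb|a IHa|a IHa|a IHa|a IHa] i.
- by case=> fa fb; rewrite IHa // IHb.
- by case=> fa fb; rewrite IHa // IHb.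
- by move=> fa; rewrite IHa // addnS.
- by move=> fa; rewrite IHa // addnS.
- move=> fa; split=> [[m [le_im am]]|[m [le_jim am]]].
    by exists (j + m); rewrite -IHa //; split; [lia|].
  exists (m - j); rewrite IHa // subnKC; last by lia.
  by split; [lia|].
- move=> fa; split=> [Ga m le_jim|Ga m le_im].
    have -> : m = j + (m - j) by lia.
    by rewrite -IHa //; apply: Ga; lia.
  by rewrite IHa //; apply: Ga; lia.
Qed.

Lemma sat_suffix_past (AP : finType) (f : form AP) (s : trace AP) (j k : nat) :
  is_LTL_O f -> sat (suffix j s) k f -> sat s (j + k) f.
Proof.
elim: f k => //= [a IHa b IHb|a IHa b IHb|a IHa] k.
- by case=> fa fb [ak bk]; split; [apply: IHa|apply: IHb].
- by case=> fa fb [ak|bk]; [left; apply: IHa|right; apply: IHb].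
- move=> fa [m [le_mk am]]; exists (j + m); split; first by lia.
  exact: IHa.
Qed.

Lemma in_lang_Fin_past_suffix (AP : finType) (a : form AP) (s : trace AP) (j : nat) :
  is_LTL_O a -> in_lang (Fin a) (suffix j s) -> in_lang (Fin a) s.
Proof.
move=> pa [k [_ ak]]; exists (j + k); split=> //.
exact: sat_suffix_past.
Qed.

Theorem lemma18 (AP : finType) (phi psi : form AP) :
  is_F_LTL_O phi -> is_LTL_XwXFG psi -> equiv_omega phi psi ->
  equiv_omega psi (Fin psi).
Proof.
move=> [a [-> pa]] fpsi eq_phi_psi s; split=> [psi_s|[j [_ psi_j]]].
  by exists 0.
have /eq_phi_psi phi_sj : in_lang psi (suffix j s).
  by rewrite /in_lang sat_suffix // addn0.
apply/eq_phi_psi.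
exact: in_lang_Fin_past_suffix phi_sj.
Qed.
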